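(* Let $S=B_2(q)\cong O_5(q)$, where $q=2^f>2$. If $f\neq3$, let $r$ be a Zsigmondy prime of $2^{2f}-1$ with respect to $(2,2f)$, i.e. a prime with the multiplicative order of $2$ modulo $r$ equal to $2f$; if $f=3$, let $r=q-1=7$. If $R\in\mathrm{Syl}_r(S)$, then $C_{\widehat{A}_0}(R)\le S$.
   Context: $\widehat{A}_0$ denotes the subgroup of $\mathrm{Aut}(S)$ generated by $S$ (identified with $\mathrm{Inn}(S)$) and all field automorphisms of $S$. *)

From HB Require Import structures.
From mathcomp Require Import all_boot all_order all_algebra all_fingroup all_solvable all_field.
Set Implicit Arguments. Unset Strict Implicit. Unset Printing Implicit Defensive.
Import GRing.Theory.
Local Open Scope ring_scope.
Local Open Scope group_scope.

Definition mult_order_is (a r n : nat) : Prop :=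
  ((1 < r)%N /\ (0 < n)%N /\ (a ^ n = 1 %[mod r])%N /\
  (forall k : nat, (0 < k)%N -> (k < n)%N -> (a ^ k <> 1 %[mod r])%N)).

(* Standard alternating (symplectic) form on F^4: J i j = 1 iff i + j = 3.
   Over a field of characteristic 2 it is alternating (zero diagonal) and
   nondegenerate. *)
Definition sympJ (F : fieldType) : 'M[F]_4 :=
  \matrix_(i < 4, j < 4) (if (i + j == 3)%N then 1%R else 0%R).

(* S = Sp_4(F) (~ B_2(q) ~ O_5(q) for F = GF(2^f)), inside GL_4(F). *)
Definition Sp4 (F : finFieldType) : {set {'GL_4[F]}} :=
  [set g : {'GL_4[F]} | GLval g *m sympJ F *m (GLval g)^T == sympJ F].

Definition InnS (F : finFieldType) : {set {perm {'GL_4[F]}}} :=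
  [set a in Aut (Sp4 F) | [exists x in Sp4 F, [forall y in Sp4 F, a y == y ^ x]]].

Definition is_field_aut (F : finFieldType) (s : {perm F}) : bool :=
  [forall x : F, forall y : F, (s (x + y)%R == s x + s y)%R && (s (x * y)%R == s x * s y)%R]
  && (s 1%R == 1%R).

Definition FieldAutS (F : finFieldType) : {set {perm {'GL_4[F]}}} :=
  [set a in Aut (Sp4 F) | [exists s : {perm F}, is_field_aut s &&
      [forall y in Sp4 F, GLval (a y) == map_mx s (GLval y)]]].

Definition Ahat0 (F : finFieldType) : {set {perm {'GL_4[F]}}} :=
  <<InnS F :|: FieldAutS F>>.

From HB Require Import structures.
From mathcomp Require Import all_boot all_order all_algebra all_fingroup all_solvable all_field.
From mathcomp Require Import ring.
Set Implicit Arguments. Unset Strict Implicit. Unset Printing Implicit Defensive.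
Import GRing.Theory.
Local Open Scope ring_scope.

(* Every element of \hat A_0 acts on S = Sp_4(q) as y |-> (y^s)^g, with g in S
   and s a field automorphism applied entrywise, because these maps form a
   group containing the generators.  If such a map centralises a Sylow
   r-subgroup R then, as every r-element of S is conjugate into R and traces
   are conjugation invariant, s fixes the trace t of every r-element of S; in
   particular of an element z of order r of SL_2(q), embedded in S on a
   hyperbolic pair.  The fixed field of s has order N = 2^e, so Frobenius shows
   that z^N is again a root of X^2 + tX + 1, the characteristic polynomial of
   z; comparing traces and determinants gives z^N = z or z^N = z^-1, whence
   r | N^2 - 1.  The choice of r forbids this for 0 < e < f, so s = 1 and the
   automorphism is inner. *)

Lemma sqrn_sub1 n : (n ^ 2 - 1 = n.-1 * n.+1)%N.
Proof. by rewrite -[in LHS](exp1n 2) subn_sqr subn1 addn1. Qed.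

Lemma prime_dvdn_of_expr_eq1 (R : pzRingType) (x : R) (r m : nat) :
  prime r -> x ^+ r = 1 -> x != 1 -> x ^+ m = 1 -> (r %| m)%N.
Proof.
move=> pr xr x1 xm; apply: contraR x1 => r_ndvd_m.
have /eqnP co_rm : coprime r m by rewrite prime_coprime.
have [a _ /dvdnP[k Ek]] := Bezoutl m (prime_gt0 pr); rewrite co_rm in Ek.
have := congr1 (GRing.exp x) Ek.
by rewrite exprD expr1 mulnC exprM xm expr1n mulr1 mulnC exprM xr expr1n => <-.
Qed.

Lemma detX (R : comNzRingType) n (A : 'M[R]_n) k : \det (A ^+ k) = \det A ^+ k.
Proof. by elim: k => [|k IHk]; rewrite ?det1 // !exprS det_mulmx IHk. Qed.

Section Matrix2.
Variable R : comNzRingType.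
Implicit Types A B : 'M[R]_2.

Lemma ord2P (P : 'I_2 -> Prop) : P 0 -> P 1 -> forall i, P i.
Proof.
move=> P0 P1 [[|[|//]] lt_i2].
- by rewrite (_ : Ordinal lt_i2 = 0) //; apply: val_inj.
- by rewrite (_ : Ordinal lt_i2 = 1) //; apply: val_inj.
Qed.

Lemma mulmx2E A B i j : (A *m B) i j = A i 0 * B 0 j + A i 1 * B 1 j.
Proof.
rewrite mxE !big_ord_recl big_ord0 addr0.
by congr (A i _ * B _ j + A i _ * B _ j); apply: val_inj.
Qed.

Lemma det_mx2 A : \det A = A 0 0 * A 1 1 - A 0 1 * A 1 0.
Proof.
rewrite (expand_det_row _ 0) !big_ord_recl big_ord0 /cofactor !det_mx11 !mxE /=.
rewrite (_ : lift 0 0 = 1); last exact: val_inj.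
rewrite (_ : lift 1 0 = 0); last exact: val_inj.
by rewrite (_ : ord0 = 0) // addr0 expr0 expr1 !mul1r mulN1r mulrN.
Qed.

Lemma mxtrace_mx2 A : \tr A = A 0 0 + A 1 1.
Proof.
by rewrite /mxtrace !big_ord_recl big_ord0 addr0; congr (A _ _ + A _ _); apply: val_inj.
Qed.

Lemma Cayley_Hamilton_mx2 A : A ^+ 2 = \tr A *: A - (\det A)%:M.
Proof.
apply/matrixP; apply: ord2P; apply: ord2P;
by rewrite expr2 [(A * A) _ _]mulmx2E !mxE det_mx2 mxtrace_mx2 /=; ring.
Qed.

Lemma det_mx2_addC A b : \det (A + b%:M) = \det A + b * \tr A + b ^+ 2.
Proof. by rewrite !det_mx2 mxtrace_mx2 !mxE /=; ring. Qed.

Lemma expr_mx2_span A n : exists a b, A ^+ n = a *: A + b%:M.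
Proof.
elim: n => [|n [a [b IHn]]]; first by exists 0, 1; rewrite scale0r add0r.
exists (a * \tr A + b), (- a * \det A).
rewrite exprSr IHn mulrDl -scalerAl -expr2 Cayley_Hamilton_mx2 -mulmxE mul_scalar_mx.
by rewrite scalerBr scalerA scalerDl scale_scalar_mx mulNr raddfN addrAC.
Qed.
End Matrix2.

Section SL2Char2.
Variables (F : fieldType) (pcharF2 : 2 \in [pchar F]).

Lemma sqr_SL2_pchar2 (z : 'M[F]_2) : \det z = 1 -> z ^+ 2 = \tr z *: z + 1.
Proof. by move=> dz; rewrite Cayley_Hamilton_mx2 dz -raddfN /= oppr_pchar2. Qed.

Lemma sqr_quadratic_pchar2 (A : algType F) (y : A) t :
  y ^+ 2 = t *: y + 1 -> (y ^+ 2) ^+ 2 = t ^+ 2 *: y ^+ 2 + 1.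
Proof.
move=> Ey; rewrite {1}Ey expr2 mulrDl !mulrDr mulr1 mul1r addrA -scalerAl -scalerAr.
rewrite scalerA -!expr2 -[_ + t *: y + t *: y]addrA -scalerDl addrr_pchar2 //.
by rewrite scale0r addr0 expr1n.
Qed.

Lemma expr2n_quadratic_pchar2 (A : algType F) (y : A) t e :
  y ^+ 2 = t *: y + 1 -> (y ^+ (2 ^ e)) ^+ 2 = t ^+ (2 ^ e) *: y ^+ (2 ^ e) + 1.
Proof.
move=> Ey; elim: e => [|e IHe]; first by rewrite !expr1.
by rewrite expnSr !exprM; apply: sqr_quadratic_pchar2.
Qed.

Lemma SL2_expr2n_fixed_trace (z : 'M[F]_2) e : \det z = 1 -> \tr z != 0 ->
  \tr z ^+ (2 ^ e) = \tr z -> z ^+ (2 ^ e) = z \/ z ^+ (2 ^ e) * z = 1.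
Proof.
move=> dz nz_t tN; set t := \tr z in nz_t tN; set w := z ^+ (2 ^ e).
have z2 := sqr_SL2_pchar2 dz.
have dw : \det w = 1 by rewrite detX dz expr1n.
have tr_w : \tr w = t.
  have : (\tr w - t) *: w = 0.
    apply/eqP; rewrite scalerBl subr_eq0; apply/eqP/(addIr 1).
    by rewrite -sqr_SL2_pchar2 // (expr2n_quadratic_pchar2 _ z2) tN.
  move/eqP; rewrite scaler_eq0 subr_eq0 => /orP[/eqP //|/eqP w0].
  by move: dw; rewrite w0 det0 => /eqP; rewrite eq_sym oner_eq0.
have [a [b wE]] : exists a b, w = a *: z + b%:M := expr_mx2_span z _.
have a1 : a = 1.
  apply: (mulIf nz_t); rewrite mul1r -[RHS]tr_w wE mxtraceD mxtraceZ mxtrace_scalar.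
  by rewrite mulrn_pchar ?addr0.
have : b * (b + t) = 0.
  apply: (addrI 1); rewrite addr0 -{2}dw wE a1 scale1r det_mx2_addC dz.
  by rewrite mulrDr -expr2 -/t addrA addrAC.
move/eqP; rewrite mulf_eq0 => /orP[] /eqP Eb; [left|right].
  by rewrite -/w wE a1 Eb scale1r raddf0 addr0.
have Ebt : b = t by apply/eqP; rewrite -(oppr_pchar2 pcharF2 t) -addr_eq0 Eb.
rewrite wE a1 Ebt scale1r mulrDl -expr2 z2 -mulmxE mul_scalar_mx.
by rewrite addrAC -scalerDl addrr_pchar2 // scale0r add0r.
Qed.

Lemma SL2_prime_order_fixed_trace (z : 'M[F]_2) r e :
  prime r -> odd r -> \det z = 1 -> z ^+ r = 1 -> z != 1 ->
  \tr z ^+ (2 ^ e) = \tr z -> (r %| (2 ^ e) ^ 2 - 1)%N.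
Proof.
move=> pr odd_r dz zr z1 tN; have pos_N : (0 < 2 ^ e)%N by rewrite expn_gt0.
have zdvd := prime_dvdn_of_expr_eq1 pr zr z1.
have nz_t : \tr z != 0.
  apply: contraTneq odd_r => t0; have := zdvd 2%N.
  rewrite sqr_SL2_pchar2 // t0 scale0r add0r => /(_ erefl).
  by rewrite dvdn_prime2 // => /eqP->.
have zu : z \is a GRing.unit by rewrite unitmxE dz unitr1.
rewrite sqrn_sub1.
case: (SL2_expr2n_fixed_trace dz nz_t tN) => [zN|zNz].
  apply/dvdn_mulr/zdvd/(mulIr zu); rewrite mul1r -exprSr prednK //.
by apply/dvdn_mull/zdvd; rewrite exprSr.
Qed.
End SL2Char2.

Lemma GLval_inj (R : finComUnitRingType) n : injective (@GLval n R).
Proof. exact: val_inj. Qed.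

Lemma GLvalX (R : finComUnitRingType) n (u : {'GL_n[R]}) k :
  GLval (u ^+ k)%g = GLval u ^+ k.
Proof. by elim: k => [|k IHk]; rewrite ?expg0 ?expr0 // expgS exprS GL_ME IHk. Qed.

Lemma mxtrace_GLJ (F : finFieldType) n (u v : {'GL_n[F]}) :
  \tr (GLval (u ^ v)%g) = \tr (GLval u).
Proof. by rewrite /conjg !GL_MxE GL_VxE mxtrace_mulC mulmxK // GL_unitmx. Qed.

Section SL2PrimeOrder.
Variables (F : finFieldType) (r : nat) (pr : prime r).

Lemma exists_SL2_prime_order_dvd_pred : (r %| #|F|.-1)%N ->
  exists z : 'M[F]_2, [/\ \det z = 1, z ^+ r = 1 & z != 1].
Proof.
move=> r_dvd_q1; have [u _ ou] : {u : {unit F} | u \in [set: _] & #[u]%g = r}.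
  by apply: Cauchy; rewrite // card_finField_unit.
set m := val u; have mr : m ^+ r = 1.
  by have := congr1 val (expg_order u); rewrite FinRing.val_unitX ou.
have m1 : m != 1.
  apply: contraTneq pr => m1; suff : (r %| 1)%N by rewrite dvdn1 => /eqP->.
  by rewrite -ou order_dvdn; apply/eqP/val_inj; rewrite FinRing.val_unitX expr1.
have nz_m : m != 0 by rewrite -unitfE; apply: valP.
exists (block_mx m%:M 0 0 m^-1%:M : 'M_(1 + 1)); split.
- by rewrite (@det_ublock _ 1 1) !det_scalar1 mulfV.
- rewrite (@exp_block_diag_mx _ 0 0) -!(rmorphXn (@scalar_mx F 1)).
  by rewrite exprVn mr invr1 -scalar_mx_block.
- apply: contra m1 => /eqP/(congr1 (@ulsubmx F 1 1 1 1)).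
  rewrite block_mxKul [1 : 'M_(1 + 1)](scalar_mx_block 1 1) block_mxKul.
  by move=> /matrixP/(_ 0 0); rewrite !mxE !eqxx !mulr1n => ->.
Qed.

Lemma exists_SL2_prime_order : (r %| #|F| ^ 2 - 1)%N ->
  exists z : 'M[F]_2, [/\ \det z = 1, z ^+ r = 1 & z != 1].
Proof.
have [/exists_SL2_prime_order_dvd_pred // | r_ndvd_q1] := boolP (r %| #|F|.-1)%N.
rewrite sqrn_sub1 Euclid_dvdM // (negbTE r_ndvd_q1) /= => r_dvd_q1'.
have [u _ ou] : {u | u \in 'GL_2[F]%g & #[u]%g = r}.
  by apply: Cauchy; rewrite // card_GL_2 dvdn_mull.
have ur : GLval u ^+ r = 1.
  by have := congr1 GLval (expg_order u); rewrite GLvalX ou.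
exists (GLval u); split => //; last first.
  apply: contraTneq pr => u1; suff : (r %| 1)%N by rewrite dvdn1 => /eqP->.
  by rewrite -ou order_dvdn; apply/eqP/GLval_inj; rewrite GLvalX u1 expr1.
apply/eqP; apply: contraR r_ndvd_q1 => d1.
apply: prime_dvdn_of_expr_eq1 pr _ d1 _; first by rewrite -detX ur det1.
have q_gt0 : (0 < #|F|)%N by apply/card_gt0P; exists 0.
by apply: (mulIf (GL_det u)); rewrite mul1r -exprSr prednK ?expf_card.
Qed.
End SL2PrimeOrder.
Lemma is_field_autP (F : finFieldType) (s : {perm F}) :
  reflect [/\ {morph s : x y / x + y}, {morph s : x y / x * y} & s 1 = 1] (is_field_aut s).
Proof.
apply: (iffP andP) => [[/forallP sDM /eqP s1] | [sD sM s1]].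
  have sDM' x y : s (x + y) = s x + s y /\ s (x * y) = s x * s y.
    by have /forallP/(_ y)/andP[/eqP-> /eqP->] := sDM x.
  by split=> // x y; case: (sDM' x y).
split; last exact/eqP.
by apply/forallP=> x; apply/forallP=> y; rewrite sD sM !eqxx.
Qed.

(* A copy of [fun_of_perm s] that can carry a ring morphism structure. *)
Definition field_aut_fun (F : finFieldType) (s : {perm F}) : F -> F := fun x => s x.

Definition mapGL (F : finFieldType) n (s : {perm F}) (u : {'GL_n[F]}) : {'GL_n[F]} :=
  insubd u (map_mx (field_aut_fun s) (GLval u)).

Definition fixed_field (F : finFieldType) (s : {perm F}) : {set F} := [set x | s x == x].

Section FieldAutomorphism.
Variables (F : finFieldType) (s : {perm F}) (hs : is_field_aut s).

Let sD : {morph s : x y / x + y}. Proof. by case/is_field_autP: hs. Qed.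
Let sM : {morph s : x y / x * y}. Proof. by case/is_field_autP: hs. Qed.
Let s1 : s 1 = 1. Proof. by case/is_field_autP: hs. Qed.
Let s0 : s 0 = 0. Proof. by apply: (addrI (s 0)); rewrite -sD !addr0. Qed.

HB.instance Definition _ := GRing.isNmodMorphism.Build F F (field_aut_fun s) (conj s0 sD).
HB.instance Definition _ := GRing.isMonoidMorphism.Build F F (field_aut_fun s) (conj s1 sM).

Lemma mapGLE n (u : {'GL_n[F]}) : GLval (mapGL s u) = map_mx (field_aut_fun s) (GLval u).
Proof. by rewrite /mapGL insubdK // unfold_in /= map_unitmx GL_unitmx. Qed.

Lemma mapGLM n (u v : {'GL_n[F]}) : mapGL s (u * v)%g = (mapGL s u * mapGL s v)%g.
Proof. by apply: GLval_inj; rewrite mapGLE !GL_ME !mapGLE map_mxM. Qed.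

Lemma mapGL1 n : mapGL s (1 : {'GL_n[F]})%g = 1%g.
Proof. by apply: GLval_inj; rewrite mapGLE GL_1E map_mx1. Qed.

Lemma mapGLV n (u : {'GL_n[F]}) : mapGL s u^-1%g = (mapGL s u)^-1%g.
Proof. by apply: (mulgI (mapGL s u)); rewrite -mapGLM !mulgV mapGL1. Qed.

Lemma mapGLJ n (u v : {'GL_n[F]}) : mapGL s (u ^ v)%g = (mapGL s u ^ mapGL s v)%g.
Proof. by rewrite /conjg !mapGLM mapGLV. Qed.

Lemma mxtrace_mapGL n (u : {'GL_n[F]}) : \tr (GLval (mapGL s u)) = s (\tr (GLval u)).
Proof. by rewrite mapGLE trace_map_mx. Qed.

Lemma mapGL_Sp4 u : u \in Sp4 F -> mapGL s u \in Sp4 F.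
Proof.
have sympJ_map : map_mx (field_aut_fun s) (sympJ F) = sympJ F.
  by apply/matrixP=> i j; rewrite !mxE; case: ifP; rewrite ?rmorph0 ?rmorph1.
rewrite !inE mapGLE => /eqP Su; apply/eqP.
by rewrite map_trmx -{1}sympJ_map -!map_mxM Su sympJ_map.
Qed.

Lemma fixed_field0 : 0 \in fixed_field s. Proof. by rewrite inE s0. Qed.
Lemma fixed_field1 : 1 \in fixed_field s. Proof. by rewrite inE s1. Qed.

Lemma fixed_field_group_set : group_set (fixed_field s).
Proof.
apply/group_setP; split=> [|x y]; first exact: fixed_field0.
by rewrite !inE FinRing.zmodMgE sD => /eqP-> /eqP->.
Qed.

Lemma card_fixed_field_dvdn : (#|fixed_field s| %| #|F|)%N.
Proof. by rewrite -cardsT (cardSg (subsetT (Group fixed_field_group_set))). Qed.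

Lemma fixed_field_expr_card x : x \in fixed_field s -> x ^+ #|fixed_field s| = x.
Proof.
move=> Kx; have [->|nz_x] := eqVneq x 0.
  by rewrite expr0n; case: eqP => // /card0_eq/(_ 0); rewrite fixed_field0.
pose U := [set u : {unit F} | val u \in fixed_field s].
have U_group_set : group_set U.
  apply/group_setP; split=> [|u v]; rewrite !inE ?FinRing.val_unitM ?s1 //.
  by rewrite sM => /eqP-> /eqP->.
have card_U : #|U| = #|fixed_field s|.-1.
  rewrite (cardsD1 0 (fixed_field s)) fixed_field0 -(card_imset _ val_inj).
  apply: eq_card => y; rewrite in_setD1; apply/imsetP/andP => [[u]|[nz_y Ky]].
    by rewrite inE => Ku ->; split=> //; rewrite -unitfE; apply: valP.
  have uy : y \is a GRing.unit by rewrite unitfE.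
  by exists (FinRing.unit F uy); rewrite // inE.
have ux : x \is a GRing.unit by rewrite unitfE.
have Ux : FinRing.unit F ux \in Group U_group_set by rewrite inE.
have /(congr1 val) := expg_cardG Ux; rewrite FinRing.val_unitX /= card_U => x_expN1.
by rewrite -[in RHS](mulr1 x) -x_expN1 -exprS prednK // (cardD1 0) fixed_field0.
Qed.
End FieldAutomorphism.

Lemma card_fixed_field_pow2 (F : finFieldType) f (s : {perm F}) :
  #|F| = (2 ^ f)%N -> is_field_aut s ->
  exists2 e, (0 < e <= f)%N & #|fixed_field s| = (2 ^ e)%N.
Proof.
move=> cF hs; have [e le_ef cK] : exists2 e, (e <= f)%N & #|fixed_field s| = (2 ^ e)%N.
  by apply/(dvdn_pfactor _ _ (isT : prime 2)); rewrite -cF card_fixed_field_dvdn.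
exists e => //; rewrite le_ef andbT -(ltn_exp2l 0 _ (isT : (1 < 2)%N)) -cK.
by apply/card_gt1P; exists 0, 1; rewrite fixed_field0 // fixed_field1 // eq_sym oner_eq0.
Qed.

Section FieldAutomorphismGroup.
Variable F : finFieldType.
Implicit Types s : {perm F}.

Lemma field_aut1 : is_field_aut (1%g : {perm F}).
Proof. by apply/is_field_autP; split=> [x y|x y|]; rewrite !perm1. Qed.

Lemma field_autM s1 s2 :
  is_field_aut s1 -> is_field_aut s2 -> is_field_aut (s1 * s2)%g.
Proof.
move=> /is_field_autP[D1 M1 I1] /is_field_autP[D2 M2 I2].
by apply/is_field_autP; split=> [x y|x y|]; rewrite !permM ?D1 ?D2 ?M1 ?M2 ?I1 ?I2.
Qed.

Lemma mapGL_id n (u : {'GL_n[F]}) : mapGL 1%g u = u.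
Proof.
apply: GLval_inj; rewrite (mapGLE (field_aut1)) map_mx_id // => x.
by rewrite /field_aut_fun perm1.
Qed.

Lemma mapGL_comp n s1 s2 (u : {'GL_n[F]}) : is_field_aut s1 -> is_field_aut s2 ->
  mapGL (s1 * s2)%g u = mapGL s2 (mapGL s1 u).
Proof.
move=> h1 h2; apply: GLval_inj.
rewrite (mapGLE (field_autM h1 h2)) (mapGLE h2) (mapGLE h1) -map_mx_comp.
by apply: eq_map_mx => x; rewrite /field_aut_fun /= permM.
Qed.
End FieldAutomorphismGroup.

Section InnerFieldAutomorphisms.
Variable F : finFieldType.
Local Open Scope group_scope.

Lemma Sp4_group_set : group_set (Sp4 F).
Proof.
apply/group_setP; split=> [|x y]; first by rewrite inE GL_1E mul1mx trmx1 mulmx1.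
rewrite !inE GL_MxE trmx_mul !mulmxA => /eqP Sx /eqP Sy.
by rewrite -(mulmxA (GLval x)) -(mulmxA _ _ (GLval y)^T) Sy Sx.
Qed.
Canonical Sp4_group := Group Sp4_group_set.

Definition InnFieldAutS : {set {perm {'GL_4[F]}}} :=
  [set a in Aut (Sp4 F) | [exists g in Sp4 F, exists s : {perm F},
     is_field_aut s && [forall y in Sp4 F, a y == mapGL s y ^ g]]].

Lemma InnFieldAutSP a : reflect
  (a \in Aut (Sp4 F) /\ exists2 g, g \in Sp4 F & exists2 s : {perm F},
     is_field_aut s & {in Sp4 F, forall y, a y = mapGL s y ^ g})
  (a \in InnFieldAutS).
Proof.
apply: (iffP setIdP) => [[Aa /exists_inP[g Sg /existsP[s /andP[hs /forall_inP Ea]]]]|].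
  by split=> //; exists g => //; exists s => // y /Ea/eqP.
case=> Aa [g Sg [s hs Ea]]; split=> //; apply/exists_inP; exists g => //.
by apply/existsP; exists s; rewrite hs; apply/forall_inP => y /Ea->.
Qed.

Lemma InnFieldAutS_group_set : group_set InnFieldAutS.
Proof.
apply/group_setP; split.
  apply/InnFieldAutSP; split; first exact: group1.
  exists 1; first exact: group1.
  by exists 1; [exact: field_aut1 | move=> y _; rewrite perm1 conjg1 mapGL_id].
move=> a1 a2 /InnFieldAutSP[A1 [g1 S1 [s1 h1 E1]]] /InnFieldAutSP[A2 [g2 S2 [s2 h2 E2]]].
apply/InnFieldAutSP; split; first exact: groupM.
exists (mapGL s2 g1 * g2); first by rewrite groupM ?mapGL_Sp4.
exists (s1 * s2); first exact: field_autM.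
move=> y Sy; have S1y := groupJ (mapGL_Sp4 h1 Sy) S1.
by rewrite permM E1 // E2 // (mapGLJ h2) mapGL_comp // conjgM.
Qed.
Canonical InnFieldAutS_group := Group InnFieldAutS_group_set.

Lemma Ahat0_sub_InnFieldAutS : Ahat0 F \subset InnFieldAutS.
Proof.
rewrite gen_subG subUset; apply/andP; split; apply/subsetP => a /setIdP[Aa].
  case/exists_inP=> g Sg /forall_inP Ea; apply/InnFieldAutSP; split=> //.
  exists g => //; exists 1; first exact: field_aut1.
  by move=> y /Ea/eqP->; rewrite mapGL_id.
case/existsP=> s /andP[hs /forall_inP Ea]; apply/InnFieldAutSP; split=> //.
exists 1; first exact: group1.
by exists s => // y /Ea/eqP Eay; rewrite conjg1; apply: GLval_inj; rewrite Eay (mapGLE hs).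
Qed.
End InnerFieldAutomorphisms.

Section SL2inSp4.
Variable F : fieldType.

(* Coordinates 0 and 3 span a hyperbolic plane for [sympJ]; [SL2_to_Sp4 A] acts
   as A on it and as the identity on its orthogonal complement. *)
Definition hyperbolic_index (i : 'I_4) : option 'I_2 :=
  match val i with 0%N => Some 0 | 3%N => Some 1 | _ => None end.

Definition SL2_to_Sp4 (A : 'M[F]_2) : 'M[F]_4 :=
  \matrix_(i, j) match hyperbolic_index i, hyperbolic_index j with
                 | Some k, Some l => A k l
                 | _, _ => (i == j)%:R
                 end.

Lemma ord4P (P : 'I_4 -> Prop) : P 0 -> P 1 -> P 2 -> P 3 -> forall i, P i.
Proof.
move=> P0 P1 P2 P3 [[|[|[|[|//]]]] lt_i4].
- by rewrite (_ : Ordinal lt_i4 = 0) //; apply: val_inj.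
- by rewrite (_ : Ordinal lt_i4 = 1) //; apply: val_inj.
- by rewrite (_ : Ordinal lt_i4 = 2) //; apply: val_inj.
- by rewrite (_ : Ordinal lt_i4 = 3) //; apply: val_inj.
Qed.

Lemma mulmx4E (A B : 'M[F]_4) i j :
  (A *m B) i j = A i 0 * B 0 j + A i 1 * B 1 j + A i 2 * B 2 j + A i 3 * B 3 j.
Proof.
rewrite mxE !big_ord_recl big_ord0 addr0 !addrA.
by congr (A i _ * B _ j + A i _ * B _ j + A i _ * B _ j + A i _ * B _ j); apply: val_inj.
Qed.

Lemma SL2_to_Sp4M (A B : 'M[F]_2) : SL2_to_Sp4 (A *m B) = SL2_to_Sp4 A *m SL2_to_Sp4 B.
Proof.
apply/matrixP; apply: ord4P; apply: ord4P; rewrite mulmx4E !mxE /= ?mulmx2E;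
  by rewrite ?mulr0 ?mul0r ?mulr1 ?mul1r ?addr0 ?add0r.
Qed.

Lemma SL2_to_Sp4_1 : SL2_to_Sp4 1%:M = 1%:M.
Proof. by apply/matrixP; apply: ord4P; apply: ord4P; rewrite !mxE /= ?mxE. Qed.

Lemma SL2_to_Sp4X (A : 'M[F]_2) k : SL2_to_Sp4 (A ^+ k) = SL2_to_Sp4 A ^+ k.
Proof.
by elim: k => [|k IHk]; rewrite ?SL2_to_Sp4_1 // !exprS -IHk; apply: SL2_to_Sp4M.
Qed.

Lemma mxtrace_SL2_to_Sp4 (A : 'M[F]_2) : \tr (SL2_to_Sp4 A) = \tr A + 2%:R.
Proof. by rewrite mxtrace_mx2 /mxtrace !big_ord_recl big_ord0 !mxE /=; ring. Qed.

Lemma SL2_to_Sp4_sympJ (A : 'M[F]_2) : 2 \in [pchar F] -> \det A = 1 ->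
  SL2_to_Sp4 A *m sympJ F *m (SL2_to_Sp4 A)^T = sympJ F.
Proof.
move=> pcharF2; rewrite det_mx2 oppr_pchar2 // => dA.
apply/matrixP; apply: ord4P; apply: ord4P; rewrite !mulmx4E !mxE /=;
  rewrite ?mulr1n ?mulr0n ?mulr0 ?mul0r ?mulr1 ?mul1r ?addr0 ?add0r //.
all: first [by rewrite mulrC addrr_pchar2 | by rewrite -dA; ring | ring].
Qed.
End SL2inSp4.

Lemma Sylow_fixed_trace (F : finFieldType) n p (G R : {group {'GL_n[F]}}) g s :
  p.-Sylow(G)%g R -> is_field_aut s -> {in R, forall x, (mapGL s x ^ g)%g = x} ->
  forall y, y \in G -> p.-elt%g y -> s (\tr (GLval y)) = \tr (GLval y).
Proof.
move=> sylR hs fixR y Gy py; have sub_yG : <[y]>%g \subset G by rewrite cycle_subG.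
have [h _ sub_yR] := Sylow_Jsub sylR sub_yG py.
have /fixR/(congr1 (fun u => \tr (GLval u))) : (y ^ h)%g \in R.
  by rewrite (subsetP sub_yR) // memJ_conjg cycle_id.
by rewrite mxtrace_GLJ (mxtrace_mapGL hs) mxtrace_GLJ.
Qed.

(* The odd prime r divides |SL_2(2^f)| = 2^f (4^f - 1) but no |SL_2(2^e)|, 0 < e < f. *)
Definition SL2_primitive_prime (f r : nat) : Prop :=
  [/\ prime r, odd r, (r %| (2 ^ f) ^ 2 - 1)%N &
      forall e, (0 < e < f)%N -> ~~ (r %| (2 ^ e) ^ 2 - 1)%N].

Lemma field_aut_id_of_fixed_SL2_traces (F : finFieldType) f r (s : {perm F}) :
  #|F| = (2 ^ f)%N -> SL2_primitive_prime f r -> is_field_aut s ->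
  (forall z : 'M[F]_2, \det z = 1 -> z ^+ r = 1 -> s (\tr z) = \tr z) -> s =1 id.
Proof.
move=> cF [pr odd_r r_dvd r_ndvd] hs fix_tr x.
have pcharF2 : 2 \in [pchar F] by apply: card_finPcharP cF _.
have [z [dz zr z1]] : exists z : 'M[F]_2, [/\ \det z = 1, z ^+ r = 1 & z != 1].
  by apply: exists_SL2_prime_order; rewrite ?cF.
have [e /andP[e_gt0 le_ef] cK] := card_fixed_field_pow2 cF hs.
have r_dvd_e : (r %| (2 ^ e) ^ 2 - 1)%N.
  apply: (SL2_prime_order_fixed_trace pcharF2 pr odd_r dz zr z1).
  by rewrite -cK fixed_field_expr_card // inE fix_tr.
have e_f : e = f.
  apply/eqP; rewrite eqn_leq le_ef leqNgt; apply: contraL r_dvd_e => lt_ef.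
  by rewrite r_ndvd ?e_gt0.
have KT : fixed_field s = setT.
  by apply/eqP; rewrite eqEcard subsetT cardsT cK e_f cF /=.
by have := in_setT x; rewrite -KT inE => /eqP.
Qed.

Lemma Sp4_fixed_trace_SL2 (F : finFieldType) r (phi : F -> F) :
  2 \in [pchar F] -> prime r ->
  (forall y, y \in Sp4 F -> r.-elt%g y -> phi (\tr (GLval y)) = \tr (GLval y)) ->
  forall z : 'M[F]_2, \det z = 1 -> z ^+ r = 1 -> phi (\tr z) = \tr z.
Proof.
move=> pcharF2 pr fix_tr z dz zr.
have zu : SL2_to_Sp4 z \in unitmx.
  apply: (proj1 (@mulmx1_unit _ _ _ (SL2_to_Sp4 (invmx z)) _)).
  by rewrite -SL2_to_Sp4M mulmxV ?SL2_to_Sp4_1 // unitmxE dz unitr1.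
pose y := insubd (1%g : {'GL_4[F]}) (SL2_to_Sp4 z).
have yE : GLval y = SL2_to_Sp4 z by rewrite insubdK.
have yr : (y ^+ r = 1)%g.
  by apply: GLval_inj; rewrite GLvalX yE -SL2_to_Sp4X zr SL2_to_Sp4_1.
have := fix_tr y; rewrite yE mxtrace_SL2_to_Sp4 (pcharf0 pcharF2) addr0; apply.
  by rewrite inE yE SL2_to_Sp4_sympJ.
by apply: pnat_dvd (pnat_id pr); rewrite order_dvdn yr.
Qed.

Lemma Zsigmondy_SL2_primitive_prime f r :
  (if f != 3%N then prime r /\ mult_order_is 2 r (2 * f) else r = 7%N) ->
  SL2_primitive_prime f r.
Proof.
have [-> -> | _ [pr [_ [f2_gt0 [ord_2f ord_min]]]]] := eqVneq f 3%N.
  by split=> // -[|[|[]]].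
have pow2_mod1 k : ((2 ^ k) ^ 2 = 1 %[mod r])%N <-> (r %| (2 ^ k) ^ 2 - 1)%N.
  by rewrite -eqn_mod_dvd ?expn_gt0 //; split=> /eqP.
split=> //.
- have [r2|//] := even_prime pr; move: ord_2f; rewrite r2 !modn2 oddX /=.
  by case: (2 * f)%N f2_gt0.
- by apply/pow2_mod1; rewrite -expnM mulnC.
- move=> e /andP[e_gt0 lt_ef]; apply/negP => /pow2_mod1.
  by rewrite -expnM mulnC; apply: ord_min; rewrite ?muln_gt0 ?ltn_pmul2l.
Qed.

Local Open Scope group_scope.

Theorem lemma5p7 (F : finFieldType) (f r : nat) (R : {group {'GL_4[F]}}) :
  #|F| = (2 ^ f)%N -> (1 < f)%N ->
  (if f != 3%N then prime r /\ mult_order_is 2 r (2 * f) else r = 7%N) ->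
  R \in 'Syl_r(Sp4 F) ->
  forall a : {perm {'GL_4[F]}}, a \in Ahat0 F ->
    (forall x, x \in R -> a x = x) ->
    a \in InnS F.
Proof.
move=> cF _ /Zsigmondy_SL2_primitive_prime r_prim sylR a Ahat0a fixR.
have [pr _ _ _] := r_prim.
have pcharF2 : 2 \in [pchar F] by apply: card_finPcharP cF _.
have /InnFieldAutSP[Auta [g Sg [s hs Ea]]] := subsetP (Ahat0_sub_InnFieldAutS F) a Ahat0a.
have {sylR} sylR : r.-Sylow(Sp4 F) R by rewrite inE in sylR.
have s_id : s =1 id.
  apply: (field_aut_id_of_fixed_SL2_traces cF r_prim hs).
  apply: (Sp4_fixed_trace_SL2 pcharF2 pr) => y Sy ry.
  apply: (Sylow_fixed_trace (g := g) sylR hs _ Sy ry) => x Rx.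
  by rewrite -Ea ?fixR // (subsetP (pHall_sub sylR)).
apply/setIdP; split=> //; apply/exists_inP; exists g => //; apply/forall_inP => y Sy.
rewrite Ea //; apply/eqP; congr (_ ^ g).
by apply: GLval_inj; rewrite (mapGLE hs) map_mx_id.
Qed.
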